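(* Let $y$ be a string over an alphabet $\Sigma$, let $a,b\in\Sigma$ and $x\in\Sigma^*$. Then $axb\in\mathrm{MAW}(y)$ if and only if all of the following hold: $x,ax\in\mathrm{Substr}(y)$; $x=\overleftarrow{x}$; $\mathrm{DAWG}(y)$ has the edge $([x]_R,b,[xb]_R)$; the suffix link of the node $[ax]_R$ leads to $[x]_R$; and the node $[ax]_R$ has no out-going edge labeled $b$.
   Context: $\mathrm{Substr}(y)$ is the set of substrings of $y$ (including the empty string). A string $w$ is a minimal absent word (MAW) of $y$ if $w\notin\mathrm{Substr}(y)$ but every proper substring of $w$ is in $\mathrm{Substr}(y)$; $\mathrm{MAW}(y)$ is the set of these. $\mathrm{EndPos}(x)=\{i\mid |x|\le i\le|y|,\ y[i-|x|+1..i]=x\}$; $u\equiv_R v$ iff $\mathrm{EndPos}(u)=\mathrm{EndPos}(v)$; $[x]_R$ is the class of $x$, and for $x\in\mathrm{Substr}(y)$, $\overleftarrow{x}$ is the longest element of $[x]_R$. $\mathrm{DAWG}(y)$ is the edge-labeled DAG with node set $\{[x]_R\mid x\in\mathrm{Substr}(y)\}$ and edge set $\{([x]_R,b,[xb]_R)\mid x,xb\in\mathrm{Substr}(y), b\in\Sigma\}$. Its suffix links are $\{([ax]_R,a,[x]_R)\mid x,ax\in\mathrm{Substr}(y), a\in\Sigma, [ax]_R\neq[x]_R\}$; each non-source node has exactly one out-going suffix link. *)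

From mathcomp Require Import all_boot.
Set Implicit Arguments. Unset Strict Implicit. Unset Printing Implicit Defensive.

Section Strings.
Variable T : eqType.
Implicit Types (y w u v x : seq T) (a b : T).

Definition substr w y : Prop := infix w y.

Definition maw y w : Prop :=
  ~ substr w y /\ (forall u, substr u w -> u <> w -> substr u y).

(* EndPos(x) = { i | |x| <= i <= |y|, y[i-|x|+1..i] = x } (1-indexed y);
   y[i-|x|+1..i] is the 0-indexed block take |x| (drop (i-|x|) y). *)
Definition endpos y x (i : nat) : Prop :=
  size x <= i <= size y /\ take (size x) (drop (i - size x) y) = x.

(* u ==_R v  iff  EndPos(u) = EndPos(v).  The node [u]_R is identified
   with the equivalence class, so [u]_R = [v]_R iff eqR y u v. *)
Definition eqR y u v : Prop := forall i, endpos y u i <-> endpos y v i.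

(* x is the longest element of [x]_R, i.e. x = <-x (for x in Substr(y)). *)
Definition is_longest_in_class y x : Prop :=
  forall u, eqR y u x -> size u <= size x.

(* ([X]_R, b, [Z]_R) belongs to the edge set
   { ([x']_R, b, [x'b]_R) | x', x'b in Substr(y) } of DAWG(y). *)
Definition dawg_edge y X b Z : Prop :=
  exists x', [/\ substr x' y, substr (rcons x' b) y,
                 eqR y x' X & eqR y (rcons x' b) Z].

(* ([U]_R, c, [V]_R) belongs to the suffix-link set
   { ([c x']_R, c, [x']_R) | x', c x' in Substr(y), [c x']_R <> [x']_R }. *)
Definition suffix_link y U c V : Prop :=
  exists x', [/\ substr x' y, substr (c :: x') y, ~ eqR y (c :: x') x',
                 eqR y (c :: x') U & eqR y x' V].

End Strings.

(* The proper factors of [a x b] are exactly the factors of [a x] and of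
   [x b], so [a x b] is a MAW iff [a x] and [x b] occur but [a x b] does not.
   In the DAWG, [x b] occurring is the edge [([x]_R, b, [xb]_R)], and [a x b]
   not occurring is the absence of a [b]-edge out of [[ax]_R], because a right
   extension by [b] transfers along inclusion of end positions.  Finally
   [a x] is then not R-equivalent to [x], which yields the suffix link, and
   [x] is the longest of its class: a longer member would end with some
   [c x] equivalent to [x], and an occurrence of [a x] forces [c = a]. *)

From mathcomp Require Import all_boot.
From mathcomp Require Import zify.

Set Implicit Arguments. Unset Strict Implicit. Unset Printing Implicit Defensive.

Section EndPositions.
Variables (T : eqType) (y : seq T).
Implicit Types (u v w x p s : seq T) (b : T).

Lemma endposE x i :
  endpos y x i <-> exists p s, y = p ++ x ++ s /\ i = size p + size x.
Proof.
split.
- case=> /andP[x_le_i i_le_y] occ.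
  exists (take (i - size x) y), (drop i y).
  split; last by rewrite size_takel; lia.
  rewrite -{1}(cat_take_drop (i - size x) y); congr (_ ++ _).
  rewrite -{1}(cat_take_drop (size x) (drop (i - size x) y)) occ drop_drop.
  by have -> : size x + (i - size x) = i by lia.
- case=> [p [s [-> ->]]]; split; first by rewrite !size_cat; lia.
  have -> : size p + size x - size x = size p by lia.
  by rewrite drop_size_cat // take_size_cat.
Qed.

Lemma substr_endpos x : substr x y <-> exists i, endpos y x i.
Proof.
split.
- case/infixP=> [p [s y_pxs]]; exists (size p + size x).
  by apply/endposE; exists p, s.
- by case=> i /endposE [p [s [-> _]]]; apply/infixP; exists p, s.
Qed.

Lemma endpos_drop v k i : endpos y v i -> endpos y (drop k v) i.
Proof.
case/endposE=> [p [s [y_pvs ->]]]; apply/endposE.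
exists (p ++ take k v), s; split.
  by rewrite -catA (catA (take k v)) cat_take_drop.
by rewrite -[in LHS](cat_take_drop k v) !size_cat addnA.
Qed.

Lemma endpos_catl w x i : endpos y (w ++ x) i -> endpos y x i.
Proof. by move/(endpos_drop (size w)); rewrite drop_size_cat. Qed.

Lemma endpos_size_inj u v i :
  endpos y u i -> endpos y v i -> size u = size v -> u = v.
Proof. by move=> [_ yu] [_ yv] eq_size; rewrite -yu -yv eq_size. Qed.

Lemma endpos_suffix u v i :
  endpos y u i -> endpos y v i -> size u <= size v -> exists w, v = w ++ u.
Proof.
move=> yu yv le_uv; exists (take (size v - size u) v).
rewrite -[v in LHS](cat_take_drop (size v - size u)); congr (_ ++ _).
apply: endpos_size_inj (endpos_drop _ yv) yu _; rewrite size_drop; lia.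
Qed.

Lemma substr_rcons_endpos_sub u v b :
  substr (rcons u b) y -> (forall i, endpos y u i -> endpos y v i) ->
  substr (rcons v b) y.
Proof.
case/infixP=> [p [s y_ub]] u_sub_v.
have /u_sub_v /endposE [q [t [y_v size_qv]]] : endpos y u (size p + size u).
  by apply/endposE; exists p, (b :: s); rewrite y_ub -cats1 -catA; split.
have /eqP : (q ++ v) ++ t = (p ++ u) ++ b :: s.
  by rewrite -!catA -y_v y_ub cat_rcons.
rewrite eqseq_cat ?size_cat // => /andP[_ /eqP t_bs].
by apply/infixP; exists q, s; rewrite y_v t_bs cat_rcons.
Qed.

End EndPositions.

Section MinimalAbsentWords.
Variables (T : eqType) (y : seq T).
Implicit Types (u x X Z : seq T) (a b : T).

Lemma substr_cons_rcons a x b u :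
  substr u (a :: rcons x b) -> u <> a :: rcons x b ->
  substr u (a :: x) \/ substr u (rcons x b).
Proof.
case/infixP=> [[|c p] [s]] /= e ne.
- case/lastP: s e => [|s c] e; first by case: ne; rewrite e cats0.
  left; apply/infixP; exists [::], s.
  by move: e; rewrite -rcons_cons -rcons_cat => /rcons_inj [->].
- by right; apply/infixP; exists p, s; case: e.
Qed.

Lemma maw_cons_rcons a x b :
  maw y (a :: rcons x b) <->
  [/\ substr (a :: x) y, substr (rcons x b) y & ~ substr (a :: rcons x b) y].
Proof.
split.
- case=> absent proper; split=> //; apply: proper.
  + by rewrite -rcons_cons; apply: infix_rcons.
  + by move/(congr1 size); rewrite /= size_rcons; lia.
  + exact: infix_cons.
  + by move/(congr1 size); rewrite /= size_rcons; lia.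
- case=> ax_y xb_y absent; split=> // u /substr_cons_rcons /[apply].
  by case=> /infix_trans; [apply | apply].
Qed.

Lemma dawg_edge_substr X b Z : dawg_edge y X b Z -> substr (rcons X b) y.
Proof.
case=> x' [_ x'b_y x'X _].
by apply: (substr_rcons_endpos_sub x'b_y) => i /x'X.
Qed.

Lemma dawg_edge_rcons u b :
  substr (rcons u b) y -> dawg_edge y u b (rcons u b).
Proof.
by move=> ub_y; exists u; split=> //; apply: infix_trans (infix_rcons u b) ub_y.
Qed.

Lemma longest_in_class_of_cons a x :
  substr (a :: x) y -> ~ eqR y (a :: x) x -> is_longest_in_class y x.
Proof.
case/substr_endpos=> j ax_j not_ax_x u u_x; rewrite leqNgt; apply/negP=> lt_xu.
have x_j : endpos y x j := (endpos_catl (w := [:: a]) ax_j).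
have [w] := endpos_suffix x_j ((u_x j).2 x_j) (ltnW lt_xu).
case/lastP: w => [|w c] u_wcx; first by rewrite u_wcx ltnn in lt_xu.
have cx_x : eqR y (c :: x) x.
  move=> i; split; first exact: (endpos_catl (w := [:: c])).
  by move/(u_x i).2; rewrite u_wcx cat_rcons; apply: endpos_catl.
have ca : c :: x = a :: x := endpos_size_inj ((cx_x j).2 x_j) ax_j erefl.
by apply: not_ax_x; rewrite -ca.
Qed.

End MinimalAbsentWords.

Theorem lemma9 (T : eqType) (y : seq T) (a b : T) (x : seq T) :
  maw y (a :: rcons x b) <->
  (substr x y /\ substr (a :: x) y /\
   is_longest_in_class y x /\
   dawg_edge y x b (rcons x b) /\
   (exists c, suffix_link y (a :: x) c x) /\
   ~ (exists Z, dawg_edge y (a :: x) b Z)).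
Proof.
rewrite maw_cons_rcons; split.
- case=> ax_y xb_y; rewrite -rcons_cons => absent.
  have not_ax_x : ~ eqR y (a :: x) x.
    by move=> ax_x; apply/absent/(substr_rcons_endpos_sub xb_y) => i /ax_x.
  have x_y : substr x y by apply: infix_trans ax_y; apply: infix_cons.
  split=> //; split=> //.
  split; first exact: longest_in_class_of_cons ax_y not_ax_x.
  split; first exact: dawg_edge_rcons.
  split; first by exists a, x.
  by case=> Z /dawg_edge_substr.
- case=> _ [ax_y [_ [/dawg_edge_substr xb_y [_ no_edge]]]].
  split=> //; rewrite -rcons_cons => axb_y.
  by apply: no_edge; exists (rcons (a :: x) b); apply: dawg_edge_rcons.
Qed.
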